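(* For all integers $L\ge 0$ and $n\ge 1$, $$S_L(n+2,n)=\frac{n(n+1)(n+2)}{3\cdot 2^3}\left[\frac{(n+2)!}{2}\right]^{L}\left(\frac{3}{2^L}(n-1)+\frac{4}{3^L}\right).$$ In particular, $S_0(n+2,n)=\frac{n(n+1)(n+2)(3n+1)}{4!}$.
   Context: For an integer $L\ge 0$ let ${}_0F_L(z)=\sum_{n=0}^{\infty}\frac{z^n}{(n!)^{L+1}}$. Define the numbers $S_L(n,l)$ ($n,l\ge 0$) by the formal power series identities $\frac{({}_0F_L(z)-1)^l}{l!}=\sum_{n\ge l}\frac{S_L(n,l)}{(n!)^{L+1}}z^n$ for each $l\ge 0$. In particular $S_0(n,l)$ are the Stirling numbers of the second kind. *)

From HB Require Import structures.
From mathcomp Require Import all_boot all_order all_algebra.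
Set Implicit Arguments. Unset Strict Implicit. Unset Printing Implicit Defensive.
Import GRing.Theory Num.Theory.
Local Open Scope ring_scope.

(* Truncation to degree N of the formal power series
   0F_L(z) = sum_{k>=0} z^k / (k!)^(L+1), with rational coefficients.
   Coefficients of degree <= N of powers of 0F_L(z)-1 are determined by
   this truncation, so it faithfully computes the formal power series
   coefficients used below. *)
Definition F0L_trunc (L N : nat) : {poly rat} :=
  \poly_(k < N.+1) (((k`!)%:R : rat) ^+ L.+1)^-1.

(* S_L(n,l) defined by  (0F_L(z)-1)^l / l! = sum_n S_L(n,l)/(n!)^(L+1) z^n,
   i.e. S_L(n,l) = (n!)^(L+1) * [z^n] (0F_L(z)-1)^l / l!. *)
Definition SL (L n l : nat) : rat :=
  ((n`!)%:R ^+ L.+1) * ((F0L_trunc L n - 1) ^+ l)`_n / (l`!)%:R.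

From HB Require Import structures.
From mathcomp Require Import all_boot all_order all_algebra.
From mathcomp Require Import ring.
Import GRing.Theory Num.Theory.
Local Open Scope ring_scope.

(* Write 0F_L(z) - 1 = z Q(z), so that Q(0) = 1, Q_1 = 1/(2!)^(L+1) and
   Q_2 = 1/(3!)^(L+1).  The coefficient of z^(n+2) in (0F_L(z) - 1)^n is the
   coefficient of z^2 in Q^n, namely n Q_2 + C(n,2) Q_1^2; multiplying by
   ((n+2)!)^(L+1) / n! and simplifying gives the closed form. *)

Lemma expr_const1_low_coefs (R : comNzRingType) (q : {poly R}) (m : nat) :
  q`_0 = 1 ->
  [/\ (q ^+ m)`_0 = 1, (q ^+ m)`_1 = m%:R * q`_1 &
      (q ^+ m)`_2 = m%:R * q`_2 + 'C(m, 2)%:R * q`_1 ^+ 2].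
Proof.
move=> q0; elim: m => [|m [e0 e1 e2]].
  by rewrite expr0 !coef1 bin0n !mul0r addr0.
rewrite exprSr !coefM !big_ord_recr !big_ord0 /= !subnn !subn0 e0 e1 e2 q0.
rewrite binS bin1 -addn1 !natrD; split; ring.
Qed.

Lemma coef_expr_drop1 (R : comNzRingType) (p : {poly R}) (m i : nat) :
  p`_0 = 0 -> (p ^+ m)`_(m + i) = (drop_poly 1 p ^+ m)`_i.
Proof.
move=> p0; have {1}-> : p = drop_poly 1 p * 'X.
  rewrite -[LHS](poly_take_drop 1) (_ : take_poly 1 p = 0) ?add0r //.
  by apply/polyP => j; rewrite coef_take_poly coef0; case: j.
by rewrite exprMn coefMXn ltnNge leq_addr addKn.
Qed.

Lemma natr_bin2 (R : pzRingType) (n : nat) :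
  'C(n, 2)%:R * 2 = n%:R * (n%:R - 1) :> R.
Proof.
case: n => [|n]; first by rewrite bin0n !mul0r.
by rewrite -natrM mulnC -mul_bin_diag bin1 natrM [in n.+1%:R - 1]mulrSr addrK.
Qed.

Lemma coef_F0L_trunc_sub1 (L N k : nat) : (0 < k <= N)%N ->
  (F0L_trunc L N - 1)`_k = ((k`!)%:R ^+ L.+1)^-1.
Proof.
case/andP=> k_gt0 le_kN; rewrite coefB coef1 coef_poly ltnS le_kN.
by case: k k_gt0 {le_kN} => // k _; rewrite subr0.
Qed.

Lemma SL_add2E (L n : nat) : (0 < n)%N ->
  SL L (n + 2) n =
    ((n.+2)`!)%:R ^+ L.+1 / (n`!)%:R *
    (n%:R / (3`!)%:R ^+ L.+1 + 'C(n, 2)%:R / ((2`!)%:R ^+ L.+1) ^+ 2).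
Proof.
move=> n_gt0; set P := F0L_trunc L (n + 2) - 1.
have P0 : P`_0 = 0 by rewrite coefB coef1 coef_poly fact0 expr1n invr1 subrr.
have Pk k : (0 < k <= 3)%N -> P`_k = ((k`!)%:R ^+ L.+1)^-1.
  case/andP=> k_gt0 le_k3; apply: coef_F0L_trunc_sub1.
  by rewrite k_gt0 (leq_trans le_k3) // addn2 !ltnS.
have drop1P_0 : (drop_poly 1 P)`_0 = 1 by rewrite coef_drop_poly Pk // expr1n invr1.
have [_ _ coef2] := @expr_const1_low_coefs _ _ n drop1P_0.
rewrite /SL -/P coef_expr_drop1 // coef2 !coef_drop_poly !Pk //.
by rewrite addn2 !addn1 exprVn mulrAC.
Qed.

Lemma SL_add2_closed (L n : nat) : (0 < n)%N ->
  SL L (n + 2) n =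
    (n%:R * (n.+1)%:R * (n.+2)%:R / (3 * 2 ^+ 3)) *
    ((((n.+2)`!)%:R / 2) ^+ L) *
    (3 / 2 ^+ L * (n%:R - 1) + 4 / 3 ^+ L).
Proof.
move=> n_gt0; rewrite SL_add2E //.
have -> : 'C(n, 2)%:R = n%:R * (n%:R - 1) / 2 :> rat.
  by rewrite -natr_bin2 mulfK.
rewrite !factS fact0 !natrM !exprMn !expr1n !mulr1 exprVn !exprS.
by field; rewrite !expf_eq0 !pnatr_eq0 !andbF -lt0n fact_gt0.
Qed.

Theorem mainTheorem5 :
  (forall L n : nat, (1 <= n)%N ->
    SL L (n + 2) n =
      (n%:R * (n.+1)%:R * (n.+2)%:R / (3 * 2 ^+ 3)) *
      ((((n.+2)`!)%:R / 2) ^+ L) *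
      (3 / 2 ^+ L * (n%:R - 1) + 4 / 3 ^+ L))
  /\
  (forall n : nat, (1 <= n)%N ->
    SL 0 (n + 2) n =
      n%:R * (n.+1)%:R * (n.+2)%:R * (3 * n%:R + 1) / (4`!)%:R).
Proof.
split; first exact: SL_add2_closed.
move=> n n_gt0; rewrite SL_add2_closed // !expr0 mulr1 !factS fact0.
by field.
Qed.
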